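(* Let $X$ be a complex vector space equipped with an inner product $\langle\cdot,\cdot\rangle'$ with induced norm $\|x\|'=\sqrt{\langle x,x\rangle'}$. Suppose that for each $\alpha\in(0,1]$ we are given a map $\langle\cdot,\cdot\rangle_\alpha : X\times X\to\mathbb{C}$ and real constants $A_\alpha,B_\alpha$ with $0<A_\alpha\le B_\alpha<\infty$ such that for all $x,y\in X$ and all $\alpha\in(0,1]$, \[ A_\alpha\,|\langle x,y\rangle'| \le |\langle x,y\rangle_\alpha| \le B_\alpha\,|\langle x,y\rangle'|. \] For $x\in X$ put $\|x\|_\alpha=\sqrt{\langle x,x\rangle_\alpha}$ (any complex square root), so $|\|x\|_\alpha^2|=|\langle x,x\rangle_\alpha|$. Then for all $x,y\in X$ and all $\alpha\in(0,1]$: (i) (Fuzzy Cauchy–Schwarz) $\displaystyle |\langle x,y\rangle_\alpha|\le \frac{B_\alpha}{A_\alpha}\,\big|\|x\|_\alpha\|y\|_\alpha\big|$; (ii) (Fuzzy parallelogram inequality) \[ \frac{2A_\alpha}{B_\alpha}\big(|\|x\|_\alpha^2|+|\|y\|_\alpha^2|\big)\le |\|x+y\|_\alpha^2|+|\|x-y\|_\alpha^2|\le \frac{2B_\alpha}{A_\alpha}\big(|\|x\|_\alpha^2|+|\|y\|_\alpha^2|\big); \] (iii) (Fuzzy polarization inequality, real case) if $X$ is a real vector space and $\langle\cdot,\cdot\rangle'$ is a real inner product (the same bounds being assumed), then \[ |\|x+y\|_\alpha^2|\le \frac{B_\alpha}{A_\alpha}\big(4|\langle x,y\rangle_\alpha|+|\|x-y\|_\alpha^2|\big);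 \] (iv) (Fuzzy Bessel inequality) if $\{e_i\}_{i=1}^\infty$ is an orthonormal sequence in $X$ with respect to $\langle\cdot,\cdot\rangle'$, then \[ \sum_{i=1}^\infty |\langle x,e_i\rangle_\alpha|^2\le \frac{B_\alpha^2}{A_\alpha}\,|\|x\|_\alpha^2|. \]
   Context: The map $\langle\cdot,\cdot\rangle_\alpha$ satisfying the two-sided bound is the paper's (simplified) ''fuzzy inner product'' relative to the classical inner product $\langle\cdot,\cdot\rangle'$; $\|\cdot\|_\alpha$ is its induced fuzzy norm. *)

From HB Require Import structures.
From mathcomp Require Import all_boot all_order all_algebra.
From mathcomp Require Import all_classical all_reals all_analysis.
From mathcomp Require Import complex.
Set Implicit Arguments. Unset Strict Implicit. Unset Printing Implicit Defensive.
Import Order.TTheory GRing.Theory Num.Theory.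
Local Open Scope ring_scope.
Local Open Scope complex_scope.

Definition cmod (R : realType) (z : R[i]) : R := Normc.normc z.

Definition is_cinner_product (R : realType) (V : lmodType R[i])
  (ip : V -> V -> R[i]) : Prop :=
  (forall (a : R[i]) (x y z : V), ip (a *: x + y) z = a * ip x z + ip y z) /\
  (forall x y : V, ip y x = conjc (ip x y)) /\
  (forall x : V, (0 <= ip x x)%R) /\
  (forall x : V, ip x x = 0 -> x = 0).

Definition is_rinner_product (R : realType) (W : lmodType R)
  (ip : W -> W -> R) : Prop :=
  (forall (a : R) (x y z : W), ip (a *: x + y) z = a * ip x z + ip y z) /\
  (forall x y : W, ip y x = ip x y) /\
  (forall x : W, 0 <= ip x x) /\
  (forall x : W, ip x x = 0 -> x = 0).

(* Each fuzzy quantity is within the factors [A] and [B] of its classical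
   counterpart, so every inequality follows by transporting the classical
   result (Cauchy-Schwarz, the parallelogram law, the polarization identity,
   Bessel's inequality) through these bounds; the ratio [B / A] records the
   loss incurred by going down to the classical inner product and back. *)

From HB Require Import structures.
From mathcomp Require Import all_boot all_order all_algebra.
From mathcomp Require Import all_classical all_reals all_analysis.
From mathcomp Require Import complex.
From mathcomp Require Import ring.
Set Implicit Arguments. Unset Strict Implicit. Unset Printing Implicit Defensive.
Import Order.TTheory GRing.Theory Num.Theory.
Local Open Scope ring_scope.
Local Open Scope complex_scope.

Section ComplexModulus.
Variable R : realType.
Implicit Types u v : R[i].

Lemma cmod_normC u : (cmod u)%:C = `|u|.
Proof. by []. Qed.

Lemma cmod_ge0 u : 0 <= cmod u.
Proof. by rewrite -lecR cmod_normC normr_ge0. Qed.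

Lemma ger0_cmod u : 0 <= u -> (cmod u)%:C = u.
Proof. by move=> u_ge0; rewrite cmod_normC ger0_norm. Qed.

Lemma cmodM u v : cmod (u * v) = cmod u * cmod v.
Proof. exact: Normc.normcM. Qed.

Lemma cmodX2 u : cmod (u ^+ 2) = cmod u ^+ 2.
Proof. by rewrite !expr2 cmodM. Qed.

End ComplexModulus.

Section ComplexInnerProduct.
Variables (R : realType) (V : lmodType R[i]) (ip : V -> V -> R[i]).
Hypothesis ip_inner : is_cinner_product ip.

Lemma ipDl x y z : ip (x + y) z = ip x z + ip y z.
Proof. by have [lin _] := ip_inner; rewrite -{1}[x]scale1r lin mul1r. Qed.

Lemma ip0l z : ip 0 z = 0.
Proof. by apply: (addrI (ip 0 z)); rewrite -ipDl !addr0. Qed.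

Lemma ipZl a x z : ip (a *: x) z = a * ip x z.
Proof. by have [lin _] := ip_inner; rewrite -[a *: x]addr0 lin ip0l addr0. Qed.

Lemma ipC x y : ip y x = conjc (ip x y).
Proof. by have [_ [sym _]] := ip_inner. Qed.

Lemma ipBl x y z : ip (x - y) z = ip x z - ip y z.
Proof. by rewrite ipDl -scaleN1r ipZl mulN1r. Qed.

Lemma ipDr x y z : ip z (x + y) = ip z x + ip z y.
Proof. by rewrite ipC ipDl rmorphD (ipC x z) (ipC y z). Qed.

Lemma ipZr a x z : ip z (a *: x) = conjc a * ip z x.
Proof. by rewrite ipC ipZl rmorphM (ipC x z). Qed.

Lemma ipBr x y z : ip z (x - y) = ip z x - ip z y.
Proof. by rewrite ipC ipBl rmorphB (ipC x z) (ipC y z). Qed.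

Lemma ip_suml n (u : 'I_n -> V) z :
  ip (\sum_(i < n) u i) z = \sum_(i < n) ip (u i) z.
Proof. exact: (big_morph (fun w => ip w z) (fun a b => ipDl a b z) (ip0l z)). Qed.

Lemma ip_sumr n (u : 'I_n -> V) z :
  ip z (\sum_(i < n) u i) = \sum_(i < n) ip z (u i).
Proof.
by rewrite ipC ip_suml rmorph_sum; apply: eq_bigr => i _; rewrite (ipC (u i) z).
Qed.

Lemma ipxx_ge0 x : 0 <= ip x x.
Proof. by have [_ [_ [pos _]]] := ip_inner. Qed.

Lemma ipxx_eq0 x : ip x x = 0 -> x = 0.
Proof. by have [_ [_ [_ def]]] := ip_inner; apply: def. Qed.

Lemma ip_CauchySchwarz x y : `|ip x y| ^+ 2 <= ip x x * ip y y.
Proof.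
have [/ipxx_eq0 -> | yy_neq0] := eqVneq (ip y y) 0.
  by rewrite ipC !ip0l conjc0 normr0 expr0n mulr0.
set t := ip y y; set c := ip x y.
have t_gt0 : 0 < t by rewrite lt0r yy_neq0 ipxx_ge0.
have t_real : conjc t = t by apply: geC0_conj; apply: ipxx_ge0.
(* [z] is [t] times the component of [x] orthogonal to [y]. *)
set z := t *: x - c *: y.
have yz_eq0 : ip y z = 0 by rewrite ipBr !ipZr t_real -ipC mulrC subrr.
have zz : ip z z = t * (t * ip x x - conjc c * c).
  by rewrite {1}/z ipBl !ipZl yz_eq0 mulr0 subr0 ipBr !ipZr t_real mulrBr.
have := ipxx_ge0 z; rewrite zz pmulr_rge0 // subr_ge0 (mulrC t).
by rewrite normCKC.
Qed.

Lemma ip_Bessel x n (e : 'I_n -> V) :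
    (forall i j, ip (e i) (e j) = (i == j)%:R) ->
  \sum_(i < n) `|ip x (e i)| ^+ 2 <= ip x x.
Proof.
move=> e_orthonormal.
set z := x - \sum_(i < n) ip x (e i) *: e i.
have ez_eq0 j : ip (e j) z = 0.
  rewrite ipBr ip_sumr (bigD1 j) //= big1 => [|i /negPf ij].
    by rewrite addr0 ipZr e_orthonormal eqxx mulr1 -ipC subrr.
  by rewrite ipZr e_orthonormal eq_sym ij mulr0.
have zz : ip z z = ip x x - \sum_(i < n) `|ip x (e i)| ^+ 2.
  rewrite {1}/z ipBl ip_suml big1 ?subr0 => [|i _]; last by rewrite ipZl ez_eq0 mulr0.
  rewrite ipBr ip_sumr; congr (_ - _); apply: eq_bigr => i _.
  by rewrite ipZr normCKC.
by rewrite -subr_ge0 -zz ipxx_ge0.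
Qed.

Lemma cmod_ipxx x : (cmod (ip x x))%:C = ip x x.
Proof. exact/ger0_cmod/ipxx_ge0. Qed.

Lemma cmod_ip_CauchySchwarz x y :
  cmod (ip x y) ^+ 2 <= cmod (ip x x) * cmod (ip y y).
Proof.
have CS := ip_CauchySchwarz x y.
rewrite -cmod_normC -[ip x x]cmod_ipxx -[ip y y]cmod_ipxx in CS.
by rewrite -rmorphXn -rmorphM lecR in CS.
Qed.

Lemma cmod_ip_parallelogram x y :
  cmod (ip (x + y) (x + y)) + cmod (ip (x - y) (x - y))
    = 2 * (cmod (ip x x) + cmod (ip y y)).
Proof.
apply: complexI; rewrite rmorphM rmorph_nat !rmorphD /= !cmod_ipxx.
by rewrite !ipBl !ipDl !ipBr !ipDr; ring.
Qed.

Lemma cmod_ip_Bessel x n (e : nat -> V) :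
    (forall i j : nat, ip (e i) (e j) = (i == j)%:R) ->
  \sum_(i < n) cmod (ip x (e i)) ^+ 2 <= cmod (ip x x).
Proof.
move=> e_orthonormal; rewrite -lecR cmod_ipxx rmorph_sum.
under eq_bigr do rewrite rmorphXn /= cmod_normC.
exact: (@ip_Bessel x n (fun i => e i) (fun i j => e_orthonormal i j)).
Qed.

End ComplexInnerProduct.

Section RealInnerProduct.
Variables (R : realType) (W : lmodType R) (ip : W -> W -> R).
Hypothesis ip_inner : is_rinner_product ip.

Lemma ripDl x y z : ip (x + y) z = ip x z + ip y z.
Proof. by have [lin _] := ip_inner; rewrite -{1}[x]scale1r lin mul1r. Qed.

Lemma rip0l z : ip 0 z = 0.
Proof. by apply: (addrI (ip 0 z)); rewrite -ripDl !addr0. Qed.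

Lemma ripZl a x z : ip (a *: x) z = a * ip x z.
Proof. by have [lin _] := ip_inner; rewrite -[a *: x]addr0 lin rip0l addr0. Qed.

Lemma ripC x y : ip y x = ip x y.
Proof. by have [_ [sym _]] := ip_inner. Qed.

Lemma ripBl x y z : ip (x - y) z = ip x z - ip y z.
Proof. by rewrite ripDl -scaleN1r ripZl mulN1r. Qed.

Lemma ripDr x y z : ip z (x + y) = ip z x + ip z y.
Proof. by rewrite ripC ripDl -!(ripC z). Qed.

Lemma ripBr x y z : ip z (x - y) = ip z x - ip z y.
Proof. by rewrite ripC ripBl -!(ripC z). Qed.

Lemma ripxx_ge0 x : 0 <= ip x x.
Proof. by have [_ [_ [pos _]]] := ip_inner. Qed.

Lemma rip_polarization x y :
  ip (x + y) (x + y) = ip (x - y) (x - y) + 4 * ip x y.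
Proof. by rewrite !ripBl !ripDl !ripBr !ripDr (ripC x y); ring. Qed.

End RealInnerProduct.

Section FuzzyInnerProduct.
Variables (R : realType) (V : lmodType R[i]) (ip' p : V -> V -> R[i]) (A B : R).
Hypotheses (ip'_inner : is_cinner_product ip') (A_gt0 : 0 < A) (A_le_B : A <= B).
Hypothesis p_bounds :
  forall x y, A * cmod (ip' x y) <= cmod (p x y) /\ cmod (p x y) <= B * cmod (ip' x y).

Let p_ge x y : A * cmod (ip' x y) <= cmod (p x y). Proof. by have [] := p_bounds x y. Qed.
Let p_le x y : cmod (p x y) <= B * cmod (ip' x y). Proof. by have [] := p_bounds x y. Qed.

Let A_ge0 : 0 <= A. Proof. exact: ltW. Qed.
Let B_gt0 : 0 < B. Proof. exact: lt_le_trans A_le_B. Qed.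
Let B_ge0 : 0 <= B. Proof. exact: ltW. Qed.

Let cmod_ip'_le x y : cmod (ip' x y) <= cmod (p x y) / A.
Proof. by rewrite ler_pdivlMr // mulrC. Qed.

Lemma fuzzy_CauchySchwarz (n : V -> R[i]) : (forall x, n x ^+ 2 = p x x) ->
  forall x y, cmod (p x y) <= B / A * cmod (n x * n y).
Proof.
move=> n_sqr x y.
have ip'_le_n : A * cmod (ip' x y) <= cmod (n x * n y).
  rewrite -ler_sqr ?nnegrE ?mulr_ge0 ?cmod_ge0 //.
  rewrite exprMn [cmod (n x * n y)]cmodM exprMn -!cmodX2 !n_sqr cmodX2.
  apply: le_trans (ler_wpM2l (sqr_ge0 A) (cmod_ip_CauchySchwarz ip'_inner x y)) _.
  by rewrite expr2 mulrACA ler_pM ?mulr_ge0 ?cmod_ge0.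
apply: le_trans (p_le x y) _.
by rewrite mulrAC ler_pdivlMr // -mulrA ler_wpM2l // mulrC.
Qed.

Lemma fuzzy_parallelogram_ge x y :
  2 * A / B * (cmod (p x x) + cmod (p y y))
    <= cmod (p (x + y) (x + y)) + cmod (p (x - y) (x - y)).
Proof.
apply: le_trans (_ : 2 * A / B * (B * cmod (ip' x x) + B * cmod (ip' y y)) <= _).
  by rewrite ler_wpM2l ?lerD // !mulr_ge0 ?invr_ge0.
rewrite -mulrDr (_ : 2 * A / B * _ = A * (2 * (cmod (ip' x x) + cmod (ip' y y)))).
  by rewrite -cmod_ip_parallelogram // mulrDr lerD.
by field; rewrite gt_eqF.
Qed.

Lemma fuzzy_parallelogram_le x y :
  cmod (p (x + y) (x + y)) + cmod (p (x - y) (x - y))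
    <= 2 * B / A * (cmod (p x x) + cmod (p y y)).
Proof.
apply: le_trans (_ : B * (cmod (ip' (x + y) (x + y)) + cmod (ip' (x - y) (x - y))) <= _).
  by rewrite mulrDr lerD.
rewrite cmod_ip_parallelogram //.
rewrite (_ : 2 * B / A * _ = B * (2 * (cmod (p x x) / A + cmod (p y y) / A))); last by ring.
by rewrite !ler_wpM2l // lerD.
Qed.

Lemma fuzzy_Bessel_partial (e : nat -> V) :
    (forall i j : nat, ip' (e i) (e j) = (i == j)%:R) ->
  forall x n, \sum_(i < n) cmod (p x (e i)) ^+ 2 <= B ^+ 2 / A * cmod (p x x).
Proof.
move=> e_orthonormal x n.
apply: le_trans (_ : \sum_(i < n) B ^+ 2 * cmod (ip' x (e i)) ^+ 2 <= _).
  apply: ler_sum => i _; rewrite -exprMn ler_sqr ?nnegrE ?cmod_ge0 //.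
  by rewrite mulr_ge0 ?cmod_ge0.
rewrite -mulr_sumr -mulrA ler_wpM2l ?exprn_ge0 // [_ * _]mulrC.
exact: le_trans (cmod_ip_Bessel ip'_inner x n e_orthonormal) (cmod_ip'_le x x).
Qed.

Lemma fuzzy_Bessel (e : nat -> V) :
    (forall i j : nat, ip' (e i) (e j) = (i == j)%:R) ->
  forall x, (\sum_(i <oo) (cmod (p x (e i)) ^+ 2)%:E
               <= (B ^+ 2 / A * cmod (p x x))%:E)%E.
Proof.
move=> e_orthonormal x; apply: lime_le.
  by apply: is_cvg_nneseries => i _ _; rewrite lee_fin exprn_ge0 ?cmod_ge0.
apply: nearW => n; rewrite sumEFin lee_fin big_mkord.
exact: fuzzy_Bessel_partial.
Qed.

End FuzzyInnerProduct.

Section RealFuzzyInnerProduct.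
Variables (R : realType) (W : lmodType R) (ip' : W -> W -> R) (p : W -> W -> R[i]).
Variables (A B : R).
Hypotheses (ip'_inner : is_rinner_product ip') (A_gt0 : 0 < A) (A_le_B : A <= B).
Hypothesis p_bounds :
  forall x y, A * `|ip' x y| <= cmod (p x y) /\ cmod (p x y) <= B * `|ip' x y|.

Let p_ge x y : A * `|ip' x y| <= cmod (p x y). Proof. by have [] := p_bounds x y. Qed.
Let p_le x y : cmod (p x y) <= B * `|ip' x y|. Proof. by have [] := p_bounds x y. Qed.

Let A_ge0 : 0 <= A. Proof. exact: ltW. Qed.
Let B_ge0 : 0 <= B. Proof. exact: le_trans A_le_B. Qed.

Let ip'_le x y : ip' x y <= cmod (p x y) / A.
Proof.
rewrite ler_pdivlMr // mulrC; apply: le_trans (p_ge x y).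
by rewrite ler_wpM2l ?ler_norm.
Qed.

Lemma fuzzy_polarization x y :
  cmod (p (x + y) (x + y))
    <= B / A * (4 * cmod (p x y) + cmod (p (x - y) (x - y))).
Proof.
apply: le_trans (p_le _ _) _.
rewrite ger0_norm ?ripxx_ge0 // rip_polarization //.
rewrite (_ : B / A * _ = B * (cmod (p (x - y) (x - y)) / A + 4 * (cmod (p x y) / A)));
  last by ring.
by rewrite ler_wpM2l // lerD ?ler_wpM2l.
Qed.

End RealFuzzyInnerProduct.

Theorem mainTheorem3 (R : realType) (V : lmodType R[i])
  (ip' : V -> V -> R[i]) (ip : R -> V -> V -> R[i]) (nrm : R -> V -> R[i])
  (A B : R -> R) :
  is_cinner_product ip' ->
  (forall a : R, 0 < a <= 1 ->
     0 < A a /\ A a <= B a /\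
     (forall x y : V, A a * cmod (ip' x y) <= cmod (ip a x y) /\
                      cmod (ip a x y) <= B a * cmod (ip' x y))) ->
  (forall (a : R) (x : V), nrm a x ^+ 2 = ip a x x) ->
  (forall a : R, 0 < a <= 1 -> forall x y : V,
     (* (i) fuzzy Cauchy-Schwarz *)
     cmod (ip a x y) <= B a / A a * cmod (nrm a x * nrm a y) /\
     (* (ii) fuzzy parallelogram inequality *)
     2 * A a / B a * (cmod (nrm a x ^+ 2) + cmod (nrm a y ^+ 2))
       <= cmod (nrm a (x + y) ^+ 2) + cmod (nrm a (x - y) ^+ 2) /\
     cmod (nrm a (x + y) ^+ 2) + cmod (nrm a (x - y) ^+ 2)
       <= 2 * B a / A a * (cmod (nrm a x ^+ 2) + cmod (nrm a y ^+ 2))) /\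
  (* (iv) fuzzy Bessel inequality *)
  (forall a : R, 0 < a <= 1 -> forall (e : nat -> V),
     (forall i j : nat, ip' (e i) (e j) = (i == j)%:R) ->
     forall x : V,
     (\sum_(i <oo) ((cmod (ip a x (e i)) ^+ 2)%:E)
       <= ((B a ^+ 2 / A a * cmod (nrm a x ^+ 2))%:E))%E) /\
  (* (iii) fuzzy polarization inequality, real case *)
  (forall (W : lmodType R) (ipW' : W -> W -> R) (ipW : R -> W -> W -> R[i])
          (nrmW : R -> W -> R[i]) (AW BW : R -> R),
     is_rinner_product ipW' ->
     (forall a : R, 0 < a <= 1 ->
        0 < AW a /\ AW a <= BW a /\
        (forall x y : W, AW a * `|ipW' x y| <= cmod (ipW a x y) /\
                         cmod (ipW a x y) <= BW a * `|ipW' x y|)) ->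
     (forall (a : R) (x : W), nrmW a x ^+ 2 = ipW a x x) ->
     forall a : R, 0 < a <= 1 -> forall x y : W,
       cmod (nrmW a (x + y) ^+ 2)
         <= BW a / AW a * (4 * cmod (ipW a x y) + cmod (nrmW a (x - y) ^+ 2))).
Proof.
move=> ip'_inner bounds nrm_sqr; split; [|split].
- move=> a /bounds [A_gt0 [A_le_B p_bounds]] x y; rewrite !nrm_sqr.
  split; first exact (fuzzy_CauchySchwarz ip'_inner A_gt0 A_le_B p_bounds (nrm_sqr a) x y).
  split; first exact (fuzzy_parallelogram_ge ip'_inner A_gt0 A_le_B p_bounds x y).
  exact (fuzzy_parallelogram_le ip'_inner A_gt0 A_le_B p_bounds x y).
- move=> a /bounds [A_gt0 [A_le_B p_bounds]] e e_orthonormal x; rewrite nrm_sqr.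
  exact (fuzzy_Bessel ip'_inner A_gt0 A_le_B p_bounds e_orthonormal x).
- move=> W ipW' ipW nrmW AW BW ipW'_inner boundsW nrmW_sqr a.
  move=> /boundsW [A_gt0 [A_le_B p_bounds]] x y; rewrite !nrmW_sqr.
  exact (fuzzy_polarization ipW'_inner A_gt0 A_le_B p_bounds x y).
Qed.
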